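(* Let $m\ge 1$ and consider any complete run of the labeled chip-firing process on $\mathbb{Z}$ starting with $2m$ chips labeled $-m,\dots,-1,1,\dots,m$ at site $0$. For integers $x,y\ge 0$ let the firing move $(x,y)$ denote the $(\min(x,y)+1)$-th to last firing move performed at site $x-y$ in this run. Then for each chip $k$ with $-m\le k<0$ and each $x$ with $0\le x\le m-1$, the position of chip $k$ immediately preceding firing move $(x,-k-1)$ is at most $x+k+1$. Similarly, for each chip $k$ with $0<k\le m$ and each $y$ with $0\le y\le m-1$, the position of chip $k$ immediately preceding firing move $(k-1,y)$ is at least $k-1-y$.
   Context: Labeled chip-firing on the infinite path graph $\mathbb{Z}$ (each integer $i$ adjacent to $i-1$ and $i+1$): a firing move consists of choosing two chips with labels $a<b$ located at a common site $i$, and moving chip $a$ to site $i-1$ and chip $b$ to site $i+1$. A complete run is a sequence of legal firing moves ending in a configuration where all chips occupy distinct sites (so no further firing move is possible). *)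

From Stdlib Require Import ZArith List Lia.
Import ListNotations.
Open Scope Z_scope.

Definition is_label (m k : Z) : Prop := k <> 0 /\ -m <= k <= m.

(* A configuration assigns a site of Z to each label (values at non-labels
   are irrelevant). *)
Definition config := Z -> Z.

Definition init_config : config := fun _ => 0.

(* A firing move is recorded as the pair (a, b) of labels of the two chips
   fired: chip a moves one step left, chip b one step right. *)
Definition fire (c : config) (mv : Z * Z) : config :=
  fun j => if Z.eq_dec j (fst mv) then c (fst mv) - 1
           else if Z.eq_dec j (snd mv) then c (snd mv) + 1
           else c j.

Definition legal (m : Z) (c : config) (mv : Z * Z) : Prop :=
  is_label m (fst mv) /\ is_label m (snd mv) /\ fst mv < snd mv /\
  c (fst mv) = c (snd mv).

(* Configuration immediately before move number t (0-based), i.e. after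
   performing the first t moves of the run starting from init_config. *)
Definition config_at (mvs : list (Z * Z)) (t : nat) : config :=
  fold_left fire (firstn t mvs) init_config.

Definition site (mvs : list (Z * Z)) (t : nat) : Z :=
  config_at mvs t (fst (nth t mvs (0, 0))).

Definition valid_run (m : Z) (mvs : list (Z * Z)) : Prop :=
  forall t : nat, (t < length mvs)%nat ->
    legal m (config_at mvs t) (nth t mvs (0, 0)).

(* All chips on distinct sites (no further move possible). *)
Definition stable (m : Z) (c : config) : Prop :=
  forall k l, is_label m k -> is_label m l -> k <> l -> c k <> c l.

Definition complete_run (m : Z) (mvs : list (Z * Z)) : Prop :=
  valid_run m mvs /\ stable m (config_at mvs (length mvs)).

Definition firings_after (mvs : list (Z * Z)) (s : Z) (t : nat) : nat :=
  length (filter (fun t' => Z.eqb (site mvs t') s)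
                 (seq (S t) (length mvs - S t))).

(* Move number t is the firing move (x, y): the (min(x,y)+1)-th to last
   firing move at site x - y, i.e. it is a move at site x - y followed by
   exactly min(x,y) later moves at site x - y. *)
Definition is_move_xy (mvs : list (Z * Z)) (x y : Z) (t : nat) : Prop :=
  (t < length mvs)%nat /\ site mvs t = x - y /\
  firings_after mvs (x - y) t = Z.to_nat (Z.min x y).

(* Write F_t(u) for the number of firings at site u among the first t moves.  The number of
   chips on u is the initial 2m chips at 0 plus the discrete Laplacian of F_t; since a site
   fires only when it holds two chips, the least action principle and a discrete maximum
   principle show that every complete run fires exactly g(u) = T(m - |u|) times at u, T the
   triangular numbers.  Hence the pending firings a_t = g - F_t are known at every move (x,y):
   a_t(x-y) = min(x,y)+1, and an invariant of a_t shows that such late firings are rigid (the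
   site holds exactly the two fired chips).  This rigidity lets one follow the chips with
   labels <= -y-1 by a downward induction on (x,y): at the move (x,y) they all sit weakly left
   of x-y, at most one of them on x-y.  The case k > 0 is the mirror image. *)

From Stdlib Require Import ZArith List Lia Bool.
Import ListNotations.
Open Scope Z_scope.

Definition zcount {A} (p : A -> bool) (l : list A) : Z := Z.of_nat (length (filter p l)).

Section Zcount.
Context {A : Type}.
Implicit Types (p q : A -> bool) (l : list A).

Lemma zcount_nonneg p l : 0 <= zcount p l.
Proof. unfold zcount; lia. Qed.

Lemma zcount_nil p : zcount p [] = 0.
Proof. reflexivity. Qed.

Lemma zcount_cons p a l : zcount p (a :: l) = (if p a then 1 else 0) + zcount p l.
Proof. unfold zcount; simpl; destruct (p a); simpl length; lia. Qed.

Lemma zcount_app p l1 l2 : zcount p (l1 ++ l2) = zcount p l1 + zcount p l2.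
Proof. unfold zcount. rewrite filter_app, length_app. lia. Qed.

Lemma zcount_ext_in p q l : (forall a, In a l -> p a = q a) -> zcount p l = zcount q l.
Proof. intros H. unfold zcount. now rewrite (filter_ext_in p q l H). Qed.

Lemma zcount_true l : zcount (fun _ => true) l = Z.of_nat (length l).
Proof. induction l as [|a l IH]; [reflexivity|]. rewrite zcount_cons, IH. simpl length. lia. Qed.

Lemma zcount_false l : zcount (fun _ => false) l = 0.
Proof. unfold zcount. now rewrite filter_false. Qed.

Lemma zcount_le p q l : (forall a, In a l -> p a = true -> q a = true) ->
  zcount p l <= zcount q l.
Proof.
  induction l as [|a l IH]; intros H; [apply Z.le_refl|]. rewrite !zcount_cons.
  specialize (IH (fun b Hb => H b (or_intror Hb))).
  destruct (p a) eqn:E; [rewrite (H a (or_introl eq_refl) E); lia|].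
  destruct (q a); lia.
Qed.

Lemma zcount_split p q l :
  zcount p l = zcount (fun a => p a && q a) l + zcount (fun a => p a && negb (q a)) l.
Proof.
  induction l as [|a l IH]; [reflexivity|]. rewrite !zcount_cons, IH.
  destruct (p a), (q a); cbn [andb negb]; lia.
Qed.

Lemma zcount_update p q l a : NoDup l -> In a l -> (forall b, b <> a -> p b = q b) ->
  zcount q l = zcount p l + (if q a then 1 else 0) - (if p a then 1 else 0).
Proof.
  induction l as [|h l IH]; intros Hnd Hin Hpq; [destruct Hin|].
  inversion Hnd as [|? ? Hh Hnd']; subst. rewrite !zcount_cons.
  destruct Hin as [->|Hin].
  - rewrite (zcount_ext_in q p l); [lia|].
    intros b Hb. symmetry. apply Hpq. intros ->. contradiction.
  - rewrite (Hpq h) by (intros ->; contradiction). rewrite IH by auto. lia.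
Qed.

Lemma zcount_ge_length p l s : NoDup s -> (forall a, In a s -> In a l /\ p a = true) ->
  Z.of_nat (length s) <= zcount p l.
Proof.
  intros Hs H. unfold zcount. apply Nat2Z.inj_le, NoDup_incl_length; auto.
  intros a Ha. now apply filter_In, H.
Qed.

Lemma zcount_gt1 p l : NoDup l -> 1 < zcount p l ->
  exists a b, a <> b /\ In a l /\ In b l /\ p a = true /\ p b = true.
Proof.
  intros Hl H. pose proof (NoDup_filter p Hl) as Hf.
  assert (Hin : forall c, In c (filter p l) -> In c l /\ p c = true) by (intros c; apply filter_In).
  unfold zcount in H. destruct (filter p l) as [|a [|b r]]; simpl in H; try lia.
  inversion Hf as [|? ? Ha _]; subst.
  destruct (Hin a (or_introl eq_refl)), (Hin b (or_intror (or_introl eq_refl))).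
  exists a, b. repeat split; auto. intros ->. apply Ha. now left.
Qed.

End Zcount.

Definition labels (m : Z) : list Z :=
  map (fun i => Z.of_nat i - m) (seq 0 (Z.to_nat m)) ++
  map (fun i => Z.of_nat i + 1) (seq 0 (Z.to_nat m)).

Lemma in_labels m j : 0 <= m -> In j (labels m) <-> is_label m j.
Proof.
  intros Hm. unfold labels, is_label. rewrite in_app_iff, !in_map_iff. split.
  - intros [[i [<- Hi]]|[i [<- Hi]]]; apply in_seq in Hi; lia.
  - intros [H1 H2]. destruct (Z_lt_le_dec j 0).
    + left. exists (Z.to_nat (j + m)). split; [lia|]. apply in_seq. lia.
    + right. exists (Z.to_nat (j - 1)). split; [lia|]. apply in_seq. lia.
Qed.

Lemma labels_NoDup m : NoDup (labels m).
Proof.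
  unfold labels. apply NoDup_app.
  - apply NoDup_map_NoDup_ForallPairs; [|apply seq_NoDup]. intros i k _ _ H. lia.
  - apply NoDup_map_NoDup_ForallPairs; [|apply seq_NoDup]. intros i k _ _ H. lia.
  - intros a Ha Hb. apply in_map_iff in Ha as [i [<- Hi]], Hb as [k [Hk Hk']].
    apply in_seq in Hi, Hk'. lia.
Qed.

Lemma zcount_labels m : 0 <= m -> zcount (fun _ => true) (labels m) = 2 * m.
Proof.
  intros Hm. rewrite zcount_true. unfold labels. rewrite length_app, !length_map, !length_seq. lia.
Qed.

Lemma zcount_labels_le m y : 0 <= y <= m -> zcount (fun j => j <=? - y - 1) (labels m) = m - y.
Proof.
  intros Hy. unfold labels. rewrite zcount_app.
  rewrite (zcount_ext_in _ (fun _ => false) (map (fun i => Z.of_nat i + 1) _)), zcount_false.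
  2:{ intros j Hj. apply in_map_iff in Hj as [i [<- _]]. apply Z.leb_gt. lia. }
  enough (H : forall n, zcount (fun j => j <=? - y - 1) (map (fun i => Z.of_nat i - m) (seq 0 n))
                      = Z.min (Z.of_nat n) (m - y)) by (rewrite H; lia).
  induction n as [|n IH]; [simpl; rewrite zcount_nil; lia|].
  rewrite seq_S, map_app, zcount_app, IH. cbn [map]. rewrite zcount_cons, zcount_nil.
  destruct (Z.leb_spec (Z.of_nat (0 + n) - m) (- y - 1)); lia.
Qed.

Definition left_chip (mvs : list (Z * Z)) (t : nat) : Z := fst (nth t mvs (0, 0)).
Definition right_chip (mvs : list (Z * Z)) (t : nat) : Z := snd (nth t mvs (0, 0)).

Lemma firstn_S_nth {A} (l : list A) t d : (t < length l)%nat ->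
  firstn (S t) l = firstn t l ++ [nth t l d].
Proof.
  revert t; induction l as [|h l IH]; intros t Ht; simpl in *; [lia|].
  destruct t; simpl; [reflexivity|]. rewrite IH by lia. reflexivity.
Qed.

Lemma config_at_S mvs t : (t < length mvs)%nat ->
  config_at mvs (S t) = fire (config_at mvs t) (left_chip mvs t, right_chip mvs t).
Proof.
  intros H. unfold config_at, left_chip, right_chip.
  rewrite (firstn_S_nth _ _ (0, 0) H), fold_left_app, <- surjective_pairing. reflexivity.
Qed.

Lemma config_at_S_chip mvs t j : (t < length mvs)%nat ->
  config_at mvs (S t) j =
  if Z.eq_dec j (left_chip mvs t) then config_at mvs t j - 1
  else if Z.eq_dec j (right_chip mvs t) then config_at mvs t j + 1
  else config_at mvs t j.
Proof.
  intros Ht. rewrite config_at_S by auto. unfold fire; cbn [fst snd].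
  destruct (Z.eq_dec j (left_chip mvs t)) as [->|]; auto.
  destruct (Z.eq_dec j (right_chip mvs t)) as [->|]; auto.
Qed.

Lemma legal_at m mvs t : valid_run m mvs -> (t < length mvs)%nat ->
  is_label m (left_chip mvs t) /\ is_label m (right_chip mvs t) /\
  left_chip mvs t < right_chip mvs t /\
  config_at mvs t (left_chip mvs t) = site mvs t /\
  config_at mvs t (right_chip mvs t) = site mvs t.
Proof. intros Hv Ht. destruct (Hv t Ht) as (? & ? & ? & ?). unfold site. auto. Qed.

Definition firings (mvs : list (Z * Z)) (u : Z) (t : nat) : Z :=
  zcount (fun t' => site mvs t' =? u) (seq 0 t).

Lemma firings_0 mvs u : firings mvs u 0 = 0.
Proof. reflexivity. Qed.

Lemma firings_S mvs u t :
  firings mvs u (S t) = firings mvs u t + (if site mvs t =? u then 1 else 0).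
Proof.
  unfold firings. rewrite seq_S, zcount_app, zcount_cons, zcount_nil. simpl. lia.
Qed.

Lemma firings_nonneg mvs u t : 0 <= firings mvs u t.
Proof. apply zcount_nonneg. Qed.

Lemma firings_mono mvs u t1 t2 : (t1 <= t2)%nat -> firings mvs u t1 <= firings mvs u t2.
Proof. induction 1; [lia|]. rewrite firings_S. destruct (_ =? _); lia. Qed.

Lemma firings_lt mvs u t1 t' t2 : (t1 <= t' < t2)%nat -> site mvs t' = u ->
  firings mvs u t1 < firings mvs u t2.
Proof.
  intros Ht Hs. pose proof (firings_mono mvs u t1 t' ltac:(lia)).
  pose proof (firings_mono mvs u (S t') t2 ltac:(lia)).
  rewrite firings_S, Hs, Z.eqb_refl in *. lia.
Qed.

Lemma firings_inj mvs u t1 t2 : site mvs t1 = u -> site mvs t2 = u ->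
  firings mvs u t1 = firings mvs u t2 -> t1 = t2.
Proof.
  intros H1 H2 H. destruct (Nat.lt_total t1 t2) as [Hlt|[|Hlt]]; auto.
  - pose proof (firings_lt mvs u t1 t1 t2 ltac:(lia) H1). lia.
  - pose proof (firings_lt mvs u t2 t2 t1 ltac:(lia) H2). lia.
Qed.

Lemma firings_after_eq mvs s t : (t < length mvs)%nat ->
  Z.of_nat (firings_after mvs s t) = firings mvs s (length mvs) - firings mvs s (S t).
Proof.
  intros H. unfold firings_after, firings, zcount.
  replace (seq 0 (length mvs)) with (seq 0 (S t) ++ seq (S t) (length mvs - S t))
    by (rewrite <- seq_app; f_equal; lia).
  rewrite filter_app, length_app. lia.
Qed.

Lemma firings_attain mvs u t k : 0 <= k < firings mvs u t ->
  exists t', (t' < t)%nat /\ site mvs t' = u /\ firings mvs u t' = k.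
Proof.
  induction t as [|t IH]; intros Hk; [rewrite firings_0 in Hk; lia|].
  rewrite firings_S in Hk.
  destruct (Z.eqb_spec (site mvs t) u) as [E|E].
  - destruct (Z.eq_dec k (firings mvs u t)) as [->|Hne]; [exists t; auto|].
    destruct IH as (t' & ? & ? & ?); [lia|]. exists t'; auto.
  - destruct IH as (t' & ? & ? & ?); [lia|]. exists t'; auto.
Qed.

Definition chips (m : Z) (mvs : list (Z * Z)) (t : nat) (v : Z) : Z :=
  zcount (fun j => config_at mvs t j =? v) (labels m).

Definition init_chips (m v : Z) : Z := if v =? 0 then 2 * m else 0.

Lemma zcount_labels_fire (q : Z -> Z -> bool) m c a b :
  0 <= m -> is_label m a -> is_label m b -> a <> b ->
  zcount (fun j => q j (fire c (a, b) j)) (labels m) =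
  zcount (fun j => q j (c j)) (labels m)
  + (if q a (c a - 1) then 1 else 0) - (if q a (c a) then 1 else 0)
  + (if q b (c b + 1) then 1 else 0) - (if q b (c b) then 1 else 0).
Proof.
  intros Hm Ha Hb Hab. apply in_labels in Ha, Hb; auto.
  set (c1 := fun j => if Z.eq_dec j a then c a - 1 else c j).
  rewrite (zcount_update (fun j => q j (c1 j)) _ _ b (labels_NoDup m) Hb).
  2:{ intros j Hj. unfold c1, fire; simpl. destruct (Z.eq_dec j a); auto.
      destruct (Z.eq_dec j b); congruence. }
  rewrite (zcount_update (fun j => q j (c j)) (fun j => q j (c1 j)) _ a (labels_NoDup m) Ha).
  2:{ intros j Hj. unfold c1. destruct (Z.eq_dec j a); congruence. }
  unfold c1, fire; simpl.
  destruct (Z.eq_dec a a); [|congruence]. destruct (Z.eq_dec b a); [congruence|].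
  destruct (Z.eq_dec b b); [|congruence]. lia.
Qed.

Lemma chips_laplacian m mvs t v : 1 <= m -> valid_run m mvs -> (t <= length mvs)%nat ->
  chips m mvs t v =
  init_chips m v + firings mvs (v - 1) t + firings mvs (v + 1) t - 2 * firings mvs v t.
Proof.
  intros Hm Hv. revert v. induction t as [|t IH]; intros v Ht.
  - unfold chips, init_chips. rewrite !firings_0.
    destruct (Z.eqb_spec v 0) as [->|Hne].
    + transitivity (zcount (fun _ => true) (labels m)); [now apply zcount_ext_in|].
      rewrite zcount_labels; lia.
    + rewrite (zcount_ext_in _ (fun _ => false)), zcount_false; [lia|].
      intros j _. apply Z.eqb_neq. auto.
  - destruct (legal_at m mvs t Hv ltac:(lia)) as (Ha & Hb & Hab & Hca & Hcb).
    unfold chips. rewrite config_at_S, (zcount_labels_fire (fun _ z => z =? v)) by (auto; lia).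
    fold (chips m mvs t v). rewrite IH, !firings_S, Hca, Hcb by lia.
    destruct (Z.eqb_spec (site mvs t - 1) v), (Z.eqb_spec (site mvs t) v),
      (Z.eqb_spec (site mvs t + 1) v), (Z.eqb_spec (site mvs t) (v - 1)),
      (Z.eqb_spec (site mvs t) (v + 1)); lia.
Qed.

Lemma chips_ge_2 m mvs t : 1 <= m -> valid_run m mvs -> (t < length mvs)%nat ->
  2 <= chips m mvs t (site mvs t).
Proof.
  intros Hm Hv Ht. destruct (legal_at m mvs t Hv Ht) as (Ha & Hb & Hab & Hca & Hcb).
  apply (zcount_ge_length _ _ [left_chip mvs t; right_chip mvs t]).
  - constructor; [intros [|[]]; lia|]. constructor; [intros []|constructor].
  - intros j [<-|[<-|[]]]; (split; [apply in_labels; auto; lia | apply Z.eqb_eq; auto]).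
Qed.

Lemma chips_le_1 m mvs v : 1 <= m -> complete_run m mvs -> chips m mvs (length mvs) v <= 1.
Proof.
  intros Hm [_ Hs]. unfold chips. apply Z.nlt_ge. intros Hgt.
  destruct (zcount_gt1 _ _ (labels_NoDup m) Hgt) as (j1 & j2 & Hne & H1 & H2 & E1 & E2).
  apply in_labels in H1, H2; try lia. apply Z.eqb_eq in E1, E2.
  exfalso. apply (Hs j1 j2 H1 H2 Hne). congruence.
Qed.

Section ValidRun.

Variables (m : Z) (mvs : list (Z * Z)).
Hypothesis Hm : 1 <= m.
Hypothesis Hv : valid_run m mvs.

Lemma config_le_preserved s j t1 t2 : (t1 <= t2 <= length mvs)%nat ->
  (forall t', (t1 <= t' < t2)%nat -> site mvs t' <> s) ->
  config_at mvs t1 j <= s -> config_at mvs t2 j <= s.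
Proof.
  intros Ht Hno H1. revert Ht Hno. induction t2 as [|t2 IH]; intros Ht Hno.
  { replace t1 with 0%nat in H1 by lia. auto. }
  destruct (Nat.eq_dec t1 (S t2)) as [E|]; [now rewrite <- E|].
  specialize (IH ltac:(lia) (fun t' Ht' => Hno t' ltac:(lia))).
  pose proof (Hno t2 ltac:(lia)).
  destruct (legal_at m mvs t2 Hv ltac:(lia)) as (_ & _ & Hab & Ha & Hb).
  rewrite config_at_S_chip by lia.
  destruct (Z.eq_dec j (left_chip mvs t2)); [lia|].
  destruct (Z.eq_dec j (right_chip mvs t2)) as [->|]; lia.
Qed.

Lemma config_arrival s j t1 t2 : (t1 <= t2 <= length mvs)%nat ->
  config_at mvs t1 j <> s -> config_at mvs t2 j = s ->
  exists t', (t1 <= t' < t2)%nat /\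
    ((j = left_chip mvs t' /\ site mvs t' = s + 1) \/ (j = right_chip mvs t' /\ site mvs t' = s - 1)).
Proof.
  intros Ht H1 H2. revert Ht H2. induction t2 as [|t2 IH]; intros Ht H2.
  { replace t1 with 0%nat in H1 by lia. contradiction. }
  destruct (Nat.eq_dec t1 (S t2)) as [E|]; [rewrite E in H1; contradiction|].
  destruct (Z.eq_dec (config_at mvs t2 j) s) as [E|E].
  { destruct (IH ltac:(lia) E) as (t' & ? & ?). exists t'. split; [lia|auto]. }
  exists t2. split; [lia|].
  destruct (legal_at m mvs t2 Hv ltac:(lia)) as (_ & _ & Hab & Ha & Hb).
  rewrite config_at_S_chip in H2 by lia.
  destruct (Z.eq_dec j (left_chip mvs t2)) as [->|]; [left; lia|].
  destruct (Z.eq_dec j (right_chip mvs t2)) as [->|]; [right; lia|contradiction].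
Qed.

Lemma fired_chips_only t j : (t < length mvs)%nat -> chips m mvs t (site mvs t) = 2 ->
  is_label m j -> config_at mvs t j = site mvs t -> j = left_chip mvs t \/ j = right_chip mvs t.
Proof.
  intros Ht H2 Hj Hp. destruct (legal_at m mvs t Hv Ht) as (Ha & Hb & Hab & Hca & Hcb).
  destruct (Z.eq_dec j (left_chip mvs t)); auto. destruct (Z.eq_dec j (right_chip mvs t)); auto.
  exfalso. unfold chips in H2.
  enough (3 <= zcount (fun i => config_at mvs t i =? site mvs t) (labels m)) by lia.
  apply (zcount_ge_length _ _ [left_chip mvs t; right_chip mvs t; j]).
  - repeat constructor; simpl; intuition lia.
  - intros i [<-|[<-|[<-|[]]]]; (split; [apply in_labels; auto; lia | apply Z.eqb_eq; auto]).
Qed.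

Lemma site_empty_after_firing t j : (t < length mvs)%nat -> chips m mvs t (site mvs t) = 2 ->
  is_label m j -> config_at mvs (S t) j <> site mvs t.
Proof.
  intros Ht H2 Hj. destruct (legal_at m mvs t Hv Ht) as (_ & _ & Hab & Hca & Hcb).
  rewrite config_at_S_chip by auto.
  destruct (Z.eq_dec j (left_chip mvs t)) as [->|]; [lia|].
  destruct (Z.eq_dec j (right_chip mvs t)) as [->|]; [lia|].
  intros E. destruct (fired_chips_only t j Ht H2 Hj E); auto.
Qed.

Definition confined (c : Z) (t : nat) (s : Z) : Prop :=
  (forall j, is_label m j -> j <= c -> config_at mvs t j <= s) /\
  (forall j1 j2, is_label m j1 -> is_label m j2 -> j1 <= c -> j2 <= c ->
     config_at mvs t j1 = s -> config_at mvs t j2 = s -> j1 = j2).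

(* Of the two chips fired, only the smaller label can be at most [c], and it moves left. *)
Lemma confined_after_firing c t : (t < length mvs)%nat -> chips m mvs t (site mvs t) = 2 ->
  confined c t (site mvs t) ->
  forall j, is_label m j -> j <= c -> config_at mvs (S t) j <= site mvs t - 1.
Proof.
  intros Ht H2 [Hle Huniq] j Hj Hjc.
  destruct (legal_at m mvs t Hv Ht) as (Ha & Hb & Hab & Hca & Hcb).
  rewrite config_at_S_chip by auto.
  destruct (Z.eq_dec j (left_chip mvs t)) as [->|]; [lia|].
  destruct (Z.eq_dec j (right_chip mvs t)) as [->|].
  - enough (left_chip mvs t = right_chip mvs t) by lia. apply Huniq; auto; lia.
  - pose proof (Hle j Hj Hjc). destruct (Z.eq_dec (config_at mvs t j) (site mvs t)); [|lia].
    destruct (fired_chips_only t j Ht H2 Hj); auto; contradiction.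
Qed.

Definition count_from (c : Z) (t : nat) (v : Z) : Z :=
  zcount (fun j => (j <=? c) && (v <=? config_at mvs t j)) (labels m).

Lemma count_from_nonneg c t v : 0 <= count_from c t v.
Proof. apply zcount_nonneg. Qed.

Lemma count_from_le y t v : 0 <= y <= m -> count_from (- y - 1) t v <= m - y.
Proof.
  intros Hy. unfold count_from. rewrite <- (zcount_labels_le m y Hy). apply zcount_le.
  intros j _ H. apply andb_true_iff in H. tauto.
Qed.

Lemma count_from_split c t u :
  count_from c t u = count_from c t (u + 1) +
    zcount (fun j => (j <=? c) && (config_at mvs t j =? u)) (labels m).
Proof.
  unfold count_from. rewrite (zcount_split _ (fun j => u + 1 <=? config_at mvs t j)). f_equal;
    apply zcount_ext_in; intros j _; destruct (j <=? c); cbn [andb]; auto;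
    destruct (Z.leb_spec u (config_at mvs t j)), (Z.leb_spec (u + 1) (config_at mvs t j)),
      (Z.eqb_spec (config_at mvs t j) u); cbn [andb negb]; auto; lia.
Qed.

Lemma count_from_S c t v : (t < length mvs)%nat ->
  count_from c (S t) v = count_from c t v
    + (if (left_chip mvs t <=? c) && (v <=? site mvs t - 1) then 1 else 0)
    - (if (left_chip mvs t <=? c) && (v <=? site mvs t) then 1 else 0)
    + (if (right_chip mvs t <=? c) && (v <=? site mvs t + 1) then 1 else 0)
    - (if (right_chip mvs t <=? c) && (v <=? site mvs t) then 1 else 0).
Proof.
  intros Ht. destruct (legal_at m mvs t Hv Ht) as (Ha & Hb & Hab & Hca & Hcb).
  unfold count_from. rewrite config_at_S by auto.
  rewrite (zcount_labels_fire (fun j z => (j <=? c) && (v <=? z))) by (auto; lia).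
  now rewrite Hca, Hcb.
Qed.

(* Only a firing of two low chips at [u] can raise a count, and only at [v = u + 1]; both
   chips were already counted at [u]. *)
Lemma count_from_staircase y t v : 0 <= y <= m - 1 -> (t <= length mvs)%nat -> 0 <= v ->
  count_from (- y - 1) t v = 0 \/ count_from (- y - 1) t v + v <= m - y.
Proof.
  intros Hy. revert v. induction t as [|t IH]; intros v Ht Hv0.
  - destruct (Z.eq_dec v 0) as [->|Hne]; [right; pose proof (count_from_le y 0 0); lia|].
    left. unfold count_from. rewrite (zcount_ext_in _ (fun _ => false)), zcount_false; auto.
    intros j _. unfold config_at, init_config. simpl. destruct (Z.leb_spec v 0); [lia|].
    apply andb_false_r.
  - destruct (legal_at m mvs t Hv ltac:(lia)) as (Ha & Hb & Hab & Hca & Hcb).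
    pose proof (IH v ltac:(lia) Hv0).
    pose proof (count_from_le y (S t) v ltac:(lia)).
    pose proof (count_from_nonneg (- y - 1) (S t) v).
    pose proof (count_from_split (- y - 1) t (site mvs t)).
    pose proof (count_from_le y t (site mvs t) ltac:(lia)).
    pose proof (count_from_nonneg (- y - 1) t (site mvs t + 1)).
    rewrite count_from_S in * by lia.
    set (u := site mvs t) in *.
    destruct (Z.leb_spec (right_chip mvs t) (- y - 1)) as [Hlow|Hhigh].
    + assert (Two : 2 <= zcount (fun j => (j <=? - y - 1) && (config_at mvs t j =? u)) (labels m)).
      { apply (zcount_ge_length _ _ [left_chip mvs t; right_chip mvs t]).
        - repeat constructor; simpl; intuition lia.
        - intros i [<-|[<-|[]]]; (split; [apply in_labels; auto; lia|]);
            (apply andb_true_iff; split; [apply Z.leb_le; lia | apply Z.eqb_eq; auto]). }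
      replace (left_chip mvs t <=? - y - 1) with true in * by (symmetry; apply Z.leb_le; lia).
      cbn [andb] in *.
      destruct (Z.eq_dec v (u + 1)) as [Hvu|Hne].
      * subst v. destruct (Z_le_gt_dec 0 u); [pose proof (IH u ltac:(lia) ltac:(lia))|];
        destruct (Z.leb_spec (u + 1) (u - 1)), (Z.leb_spec (u + 1) u), (Z.leb_spec (u + 1) (u + 1));
        lia.
      * destruct (Z.leb_spec v (u - 1)), (Z.leb_spec v u), (Z.leb_spec v (u + 1)); lia.
    + replace (right_chip mvs t <=? - y - 1) with false in * by (symmetry; apply Z.leb_gt; lia).
      cbn [andb] in *.
      destruct (left_chip mvs t <=? - y - 1); cbn [andb] in *;
        destruct (Z.leb_spec v (u - 1)), (Z.leb_spec v u); lia.
Qed.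

Lemma confined_rightmost y t : 0 <= y <= m - 1 -> (t <= length mvs)%nat ->
  confined (- y - 1) t (m - 1 - y).
Proof.
  intros Hy Ht. split.
  - intros j Hj Hjy. apply Z.nlt_ge. intros Hgt.
    assert (1 <= count_from (- y - 1) t (m - y)).
    { apply (zcount_ge_length _ _ [j]); [repeat constructor; simpl; tauto|].
      intros i [<-|[]]. split; [apply in_labels; auto; lia|].
      apply andb_true_iff; split; apply Z.leb_le; lia. }
    destruct (count_from_staircase y t (m - y)); auto; lia.
  - intros j1 j2 H1 H2 Hy1 Hy2 E1 E2. destruct (Z.eq_dec j1 j2) as [|Hne]; auto. exfalso.
    assert (2 <= count_from (- y - 1) t (m - 1 - y)).
    { apply (zcount_ge_length _ _ [j1; j2]); [repeat constructor; simpl; intuition lia|].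
      intros i [<-|[<-|[]]]; (split; [apply in_labels; auto; lia|]);
        apply andb_true_iff; split; apply Z.leb_le; lia. }
    destruct (count_from_staircase y t (m - 1 - y)); auto; lia.
Qed.

End ValidRun.

(** * The odometer *)

Fixpoint triangle (n : nat) : Z :=
  match n with O => 0 | S k => triangle k + Z.of_nat (S k) end.

Definition odometer (m u : Z) : Z := triangle (Z.to_nat (m - Z.abs u)).

Definition final_chips (m u : Z) : Z := if (1 <=? Z.abs u) && (Z.abs u <=? m) then 1 else 0.

Lemma triangle_succ z : triangle (Z.to_nat (z + 1)) = triangle (Z.to_nat z) + Z.max 0 (z + 1).
Proof.
  destruct (Z_lt_le_dec z 0).
  - replace (Z.to_nat (z + 1)) with 0%nat by lia. replace (Z.to_nat z) with 0%nat by lia.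
    simpl. lia.
  - replace (Z.to_nat (z + 1)) with (S (Z.to_nat z)) by lia. simpl triangle. lia.
Qed.

Lemma triangle_nonneg n : 0 <= triangle n.
Proof. induction n; simpl; lia. Qed.

Lemma triangle_ge z : z <= triangle (Z.to_nat z).
Proof.
  destruct (Z_lt_le_dec z 0). { pose proof (triangle_nonneg (Z.to_nat z)); lia. }
  replace z with (Z.of_nat (Z.to_nat z)) at 1 by lia.
  induction (Z.to_nat z) as [|k IH]; simpl; [lia|]. pose proof (triangle_nonneg k). lia.
Qed.

Lemma odometer_nonneg m u : 0 <= odometer m u.
Proof. apply triangle_nonneg. Qed.

Lemma odometer_outside m u : m <= Z.abs u -> odometer m u = 0.
Proof. intros H. unfold odometer. now replace (Z.to_nat (m - Z.abs u)) with 0%nat by lia. Qed.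

Lemma odometer_pos_inside m u : 1 <= odometer m u -> Z.abs u < m.
Proof.
  intros H. destruct (Z_lt_le_dec (Z.abs u) m); auto. rewrite odometer_outside in H; lia.
Qed.

Lemma odometer_laplacian m u : 1 <= m ->
  init_chips m u + odometer m (u - 1) + odometer m (u + 1) - 2 * odometer m u =
  final_chips m u.
Proof.
  intros Hm. unfold odometer, init_chips, final_chips.
  destruct (Z.lt_trichotomy u 0) as [Hu|[->|Hu]].
  - replace (Z.abs (u - 1)) with (- u + 1) by lia. replace (Z.abs (u + 1)) with (- u - 1) by lia.
    replace (Z.abs u) with (- u) by lia.
    replace (m - (- u - 1)) with (m - (- u + 1) + 1 + 1) by lia.
    replace (m - - u) with (m - (- u + 1) + 1) by lia.
    rewrite !triangle_succ. destruct (Z.eqb_spec u 0); [lia|].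
    destruct (Z.leb_spec 1 (- u)), (Z.leb_spec (- u) m); cbn [andb]; lia.
  - change (Z.abs (0 - 1)) with 1. change (Z.abs (0 + 1)) with 1. change (Z.abs 0) with 0.
    replace (m - 0) with (m - 1 + 1) by lia. rewrite triangle_succ.
    change (0 =? 0) with true. change (1 <=? 0) with false. cbn [andb]. lia.
  - replace (Z.abs (u - 1)) with (u - 1) by lia. replace (Z.abs (u + 1)) with (u + 1) by lia.
    replace (Z.abs u) with u by lia.
    replace (m - (u - 1)) with (m - (u + 1) + 1 + 1) by lia.
    replace (m - u) with (m - (u + 1) + 1) by lia.
    rewrite !triangle_succ. destruct (Z.eqb_spec u 0); [lia|].
    destruct (Z.leb_spec 1 u), (Z.leb_spec u m); cbn [andb]; lia.
Qed.

(* Least action principle: a site can only fire when it holds two chips, which the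
   odometer's final configuration never has. *)
Lemma firings_le_odometer m mvs t u : 1 <= m -> valid_run m mvs -> (t <= length mvs)%nat ->
  firings mvs u t <= odometer m u.
Proof.
  intros Hm Hv. revert u. induction t as [|t IH]; intros u Ht.
  - rewrite firings_0. apply odometer_nonneg.
  - rewrite firings_S. pose proof (IH u ltac:(lia)) as Hu.
    destruct (Z.eqb_spec (site mvs t) u) as [<-|]; [|lia].
    destruct (Z.eq_dec (firings mvs (site mvs t) t) (odometer m (site mvs t))); [|lia].
    pose proof (chips_ge_2 m mvs t Hm Hv ltac:(lia)) as H2.
    rewrite chips_laplacian in H2 by (auto; lia).
    pose proof (odometer_laplacian m (site mvs t) Hm).
    pose proof (IH (site mvs t - 1) ltac:(lia)). pose proof (IH (site mvs t + 1) ltac:(lia)).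
    unfold final_chips in *. destruct (_ && _); lia.
Qed.

(** * A discrete maximum principle *)

Lemma Z_bounded_ind_up (P : Z -> Prop) a b :
  P a -> (forall u, a <= u < b -> P u -> P (u + 1)) -> forall u, a <= u <= b -> P u.
Proof.
  intros H0 HS u Hu. replace u with (a + Z.of_nat (Z.to_nat (u - a))) by lia.
  assert (Z.of_nat (Z.to_nat (u - a)) <= b - a) by lia. clear Hu.
  induction (Z.to_nat (u - a)) as [|k IH]; [now rewrite Z.add_0_r|].
  replace (a + Z.of_nat (S k)) with (a + Z.of_nat k + 1) by lia. apply HS; [lia|]. apply IH. lia.
Qed.

Lemma Z_bounded_ind_down (P : Z -> Prop) a b :
  P b -> (forall u, a < u <= b -> P u -> P (u - 1)) -> forall u, a <= u <= b -> P u.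
Proof.
  intros Hb HS u Hu. replace u with (a + b - (a + b - u)) by lia.
  apply (Z_bounded_ind_up (fun v => P (a + b - v)) a b); try lia.
  - now replace (a + b - a) with b by lia.
  - intros v Hv H. replace (a + b - (v + 1)) with (a + b - v - 1) by lia. apply HS; [lia|auto].
Qed.

Section ConvexHalfLine.

Variables (f : Z -> Z) (n : Z).
Hypothesis convex : forall u, 1 <= u <= n -> 2 * f u <= f (u - 1) + f (u + 1).
Hypothesis end_slope : f (n + 1) <= f n.

Lemma convex_slope_nonpos u : 0 <= u <= n -> f (u + 1) <= f u.
Proof.
  revert u. apply (Z_bounded_ind_down (fun u => f (u + 1) <= f u)); auto.
  intros u Hu IH. pose proof (convex u ltac:(lia)). rewrite Z.sub_add. lia.
Qed.

Lemma convex_le_start u : 0 <= n -> 0 <= u <= n + 1 -> f u <= f 0.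
Proof.
  intros Hn. revert u. apply (Z_bounded_ind_up (fun u => f u <= f 0)); [lia|].
  intros u Hu IH. pose proof (convex_slope_nonpos u ltac:(lia)). lia.
Qed.

Lemma convex_flat : 0 <= n -> f 1 = f 0 -> f (n + 1) = f 0.
Proof.
  intros Hn H10.
  enough (H : forall u, 0 <= u <= n -> f (u + 1) = f u /\ f u = f 0)
    by (destruct (H n ltac:(lia)); lia).
  apply Z_bounded_ind_up; [auto|]. intros u Hu [IH1 IH2].
  pose proof (convex (u + 1) ltac:(lia)). pose proof (convex_slope_nonpos (u + 1) ltac:(lia)).
  rewrite Z.add_simpl_r in *. lia.
Qed.

End ConvexHalfLine.

Lemma discrete_max_principle m (D : Z -> Z) : 1 <= m ->
  (forall u, 0 <= D u) -> (forall u, m <= Z.abs u -> D u = 0) ->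
  (forall u, 1 <= Z.abs u <= m -> 2 * D u <= D (u - 1) + D (u + 1)) ->
  2 * D 0 <= D (-1) + D 1 + 1 -> forall u, D u = 0.
Proof.
  intros Hm Hpos Hout Hconv H0.
  set (E := fun u => D (- u)).
  assert (convD : forall u, 1 <= u <= m -> 2 * D u <= D (u - 1) + D (u + 1))
    by (intros u Hu; apply Hconv; lia).
  assert (convE : forall u, 1 <= u <= m -> 2 * E u <= E (u - 1) + E (u + 1)).
  { intros u Hu. unfold E. replace (- (u - 1)) with (- u + 1) by lia.
    replace (- (u + 1)) with (- u - 1) by lia. pose proof (Hconv (- u) ltac:(lia)). lia. }
  assert (endD : D (m + 1) <= D m) by (rewrite !Hout by lia; lia).
  assert (endE : E (m + 1) <= E m) by (unfold E; rewrite !Hout by lia; lia).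
  assert (HD0 : D 0 = 0).
  { pose proof (convex_slope_nonpos D m convD endD 0 ltac:(lia)) as H1.
    pose proof (convex_slope_nonpos E m convE endE 0 ltac:(lia)) as H2.
    unfold E in H2. cbn [Z.add Z.opp] in H1, H2.
    destruct (Z.eq_dec (D 1) (D 0)).
    - pose proof (convex_flat D m convD endD ltac:(lia) ltac:(auto)) as HD.
      rewrite Hout in HD by lia. lia.
    - pose proof (convex_flat E m convE endE ltac:(lia) ltac:(unfold E; cbn [Z.opp]; lia)) as HE.
      unfold E in HE. rewrite Hout in HE by lia. cbn [Z.opp] in HE. lia. }
  intros u. pose proof (Hpos u).
  destruct (Z_le_dec m (Z.abs u)); [auto|].
  destruct (Z_le_dec 0 u).
  - pose proof (convex_le_start D m convD endD u ltac:(lia) ltac:(lia)). lia.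
  - pose proof (convex_le_start E m convE endE (- u) ltac:(lia) ltac:(lia)).
    unfold E in *. rewrite Z.opp_involutive in *. cbn [Z.opp] in *. lia.
Qed.

Lemma firings_total m mvs u : 1 <= m -> complete_run m mvs ->
  firings mvs u (length mvs) = odometer m u.
Proof.
  intros Hm Hc. pose proof Hc as [Hv _].
  set (D := fun u => odometer m u - firings mvs u (length mvs)).
  assert (Hlap : forall u, chips m mvs (length mvs) u =
                           final_chips m u - D (u - 1) - D (u + 1) + 2 * D u).
  { intros v. rewrite chips_laplacian by (auto; lia).
    pose proof (odometer_laplacian m v Hm). unfold D. lia. }
  enough (H : D u = 0) by (unfold D in H; lia).
  apply (discrete_max_principle m D Hm).
  - intros v. pose proof (firings_le_odometer m mvs (length mvs) v Hm Hv (le_n _)). unfold D. lia.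
  - intros v Hv'. pose proof (firings_le_odometer m mvs (length mvs) v Hm Hv (le_n _)).
    pose proof (firings_nonneg mvs v (length mvs)).
    unfold D. rewrite odometer_outside in * by auto. lia.
  - intros v Hv'. pose proof (Hlap v). pose proof (chips_le_1 m mvs v Hm Hc).
    unfold final_chips in *. destruct (Z.leb_spec 1 (Z.abs v)), (Z.leb_spec (Z.abs v) m);
      cbn [andb] in *; lia.
  - pose proof (Hlap 0). pose proof (chips_le_1 m mvs 0 Hm Hc).
    pose proof (zcount_nonneg (fun j => config_at mvs (length mvs) j =? 0) (labels m)).
    fold (chips m mvs (length mvs) 0) in *. simpl in *. unfold final_chips in *. simpl in *. lia.
Qed.

(** * Pending firings *)

Definition pending (m : Z) (mvs : list (Z * Z)) (t : nat) (u : Z) : Z :=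
  odometer m u - firings mvs u t.

Lemma pending_S m mvs t u :
  pending m mvs (S t) u = pending m mvs t u - (if site mvs t =? u then 1 else 0).
Proof. unfold pending. rewrite firings_S. lia. Qed.

Lemma pending_antitone m mvs u t1 t2 : (t1 <= t2)%nat -> pending m mvs t2 u <= pending m mvs t1 u.
Proof. intros H. unfold pending. pose proof (firings_mono mvs u t1 t2 H). lia. Qed.

Lemma lt_of_pending_lt m mvs u t1 t2 : pending m mvs t2 u < pending m mvs t1 u -> (t1 < t2)%nat.
Proof.
  intros H. destruct (Nat.lt_ge_cases t1 t2) as [|Hle]; auto.
  pose proof (pending_antitone m mvs u t2 t1 Hle). lia.
Qed.

Lemma no_firing_of_pending_eq m mvs u t1 t2 : pending m mvs t1 u = pending m mvs t2 u ->
  forall t', (t1 <= t' < t2)%nat -> site mvs t' <> u.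
Proof.
  intros E t' Ht' Hs. pose proof (firings_lt mvs u t1 t' t2 Ht' Hs). unfold pending in E. lia.
Qed.

Lemma unique_firing_of_pending_drop m mvs u t0 t1 t t' :
  pending m mvs t1 u = pending m mvs t0 u -> pending m mvs t u = pending m mvs t0 u - 1 ->
  site mvs t1 = u -> (t0 <= t' < t)%nat -> site mvs t' = u -> t' = t1.
Proof.
  intros E1 E Hs1 Ht' Hs'. apply (firings_inj mvs u); auto.
  pose proof (firings_mono mvs u t0 t' ltac:(lia)).
  pose proof (firings_mono mvs u (S t') t ltac:(lia)).
  rewrite firings_S, Hs', Z.eqb_refl in *. unfold pending in *. lia.
Qed.

(* [Z.max 0 (Z.abs s' - Z.abs s)] is 1 if [s'] is the neighbour farther from 0, else 0. *)
Definition spread_bound (m : Z) (a : Z -> Z) : Prop :=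
  forall s s', Z.abs (s - s') = 1 ->
    Z.min (a s) (m - Z.abs s) - Z.max 0 (Z.abs s' - Z.abs s) <= a s'.

Lemma spread_bound_odometer m : spread_bound m (odometer m).
Proof.
  intros s s' H. unfold odometer. destruct (Z_lt_le_dec (Z.abs s) (Z.abs s')).
  - pose proof (triangle_ge (m - Z.abs s')). lia.
  - replace (m - Z.abs s') with (m - Z.abs s + 1) by lia. rewrite triangle_succ. lia.
Qed.

(* The last hypothesis says that [u] holds two chips when [|u| < m]. *)
Lemma spread_bound_fire m (a a' : Z -> Z) u :
  spread_bound m a -> (forall v, a' v = if v =? u then a v - 1 else a v) ->
  (if u =? 0 then 0 else 1) + 2 * a u - a (u - 1) - a (u + 1) >= 2 ->
  spread_bound m a'.
Proof.
  intros Hsb Ha Hfire s s' Hss'. rewrite !Ha. pose proof (Hsb s s' Hss').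
  destruct (Z.eqb_spec s u) as [->|Hs], (Z.eqb_spec s' u) as [->|Hs']; try lia.
  pose proof (Hsb u (u - 1) ltac:(lia)). pose proof (Hsb u (u + 1) ltac:(lia)).
  assert (s = u - 1 \/ s = u + 1) as [->| ->] by lia; destruct (Z.eqb_spec u 0); lia.
Qed.

Section CompleteRun.

Variables (m : Z) (mvs : list (Z * Z)).
Hypothesis Hm : 1 <= m.
Hypothesis Hc : complete_run m mvs.
Let Hv : valid_run m mvs := proj1 Hc.

Lemma pending_nonneg t u : (t <= length mvs)%nat -> 0 <= pending m mvs t u.
Proof.
  intros Ht. unfold pending. rewrite <- (firings_total m mvs u Hm Hc).
  pose proof (firings_mono mvs u _ _ Ht). lia.
Qed.

Lemma pending_site_pos t : (t < length mvs)%nat -> 1 <= pending m mvs t (site mvs t).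
Proof.
  intros Ht. pose proof (pending_nonneg (S t) (site mvs t) Ht).
  rewrite pending_S, Z.eqb_refl in *. lia.
Qed.

Lemma chips_pending t u : (t <= length mvs)%nat ->
  chips m mvs t u =
  final_chips m u + 2 * pending m mvs t u - pending m mvs t (u - 1) - pending m mvs t (u + 1).
Proof.
  intros Ht. rewrite chips_laplacian by auto. pose proof (odometer_laplacian m u Hm).
  unfold pending. lia.
Qed.

Lemma chips_at_site t : (t < length mvs)%nat ->
  chips m mvs t (site mvs t) =
  (if site mvs t =? 0 then 0 else 1) + 2 * pending m mvs t (site mvs t)
  - pending m mvs t (site mvs t - 1) - pending m mvs t (site mvs t + 1).
Proof.
  intros Ht. rewrite chips_pending by lia.
  enough (final_chips m (site mvs t) = if site mvs t =? 0 then 0 else 1) by lia.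
  assert (Hin : Z.abs (site mvs t) < m).
  { apply odometer_pos_inside. pose proof (pending_site_pos t Ht).
    pose proof (firings_nonneg mvs (site mvs t) t). unfold pending in *. lia. }
  unfold final_chips. destruct (Z.eqb_spec (site mvs t) 0) as [->|]; [reflexivity|].
  destruct (Z.leb_spec 1 (Z.abs (site mvs t))), (Z.leb_spec (Z.abs (site mvs t)) m);
    cbn [andb]; lia.
Qed.

Lemma spread_bound_pending t : (t <= length mvs)%nat -> spread_bound m (pending m mvs t).
Proof.
  induction t as [|t IH]; intros Ht.
  - intros s s' H. unfold pending. rewrite !firings_0, !Z.sub_0_r. now apply spread_bound_odometer.
  - apply (spread_bound_fire m (pending m mvs t) _ (site mvs t)); [apply IH; lia| |].
    + intros v. rewrite pending_S. rewrite (Z.eqb_sym v).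
      destruct (Z.eqb_spec (site mvs t) v); lia.
    + rewrite <- chips_at_site by lia. apply Z.le_ge, chips_ge_2; auto; lia.
Qed.

(* By the spread bound the two neighbours together have at least [2 a(u) - 1] pending firings
   ([2 a(u) - 2] at [u = 0]); the two chips needed to fire leave no slack. *)
Lemma late_firing t : (t < length mvs)%nat ->
  pending m mvs t (site mvs t) <= m - Z.abs (site mvs t) ->
  chips m mvs t (site mvs t) = 2 /\
  forall s', Z.abs (site mvs t - s') = 1 ->
    pending m mvs t s' = pending m mvs t (site mvs t) - Z.max 0 (Z.abs s' - Z.abs (site mvs t)).
Proof.
  intros Ht Hlate.
  pose proof (chips_ge_2 m mvs t Hm Hv Ht) as H2. rewrite chips_at_site in * by auto.
  pose proof (spread_bound_pending t ltac:(lia)) as Hsb.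
  pose proof (Hsb (site mvs t) (site mvs t - 1) ltac:(lia)).
  pose proof (Hsb (site mvs t) (site mvs t + 1) ltac:(lia)).
  set (u := site mvs t) in *.
  split; [destruct (Z.eqb_spec u 0); lia|].
  intros s' Hs'. assert (s' = u - 1 \/ s' = u + 1) as [->| ->] by lia;
    destruct (Z.eqb_spec u 0); lia.
Qed.

Lemma move_xy_pending x y t : 0 <= x <= m - 1 -> 0 <= y <= m - 1 -> is_move_xy mvs x y t ->
  chips m mvs t (site mvs t) = 2 /\
  pending m mvs t (x - y) = Z.min x y + 1 /\
  pending m mvs t (x - y + 1) = Z.min (x + 1) y /\
  pending m mvs t (x - y - 1) = Z.min x (y + 1).
Proof.
  intros Hx Hy (Ht & Hsite & Hafter).
  pose proof (firings_after_eq mvs (x - y) t Ht) as E.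
  rewrite Hafter, firings_S, Hsite, Z.eqb_refl, (firings_total m mvs _ Hm Hc) in E.
  assert (P0 : pending m mvs t (x - y) = Z.min x y + 1) by (unfold pending; lia).
  (* [min x y + |x - y| = max x y <= m - 1], so this is a late firing. *)
  destruct (late_firing t Ht ltac:(rewrite Hsite; lia)) as [Hchips Hnb].
  rewrite Hsite in Hnb. pose proof (Hnb (x - y + 1) ltac:(lia)). pose proof (Hnb (x - y - 1) ltac:(lia)).
  repeat split; auto; lia.
Qed.

Lemma move_xy_exists x y : 0 <= x <= m - 1 -> 0 <= y <= m - 1 -> exists t, is_move_xy mvs x y t.
Proof.
  intros Hx Hy.
  assert (G : Z.min x y + 1 <= firings mvs (x - y) (length mvs)).
  { rewrite (firings_total m mvs _ Hm Hc). unfold odometer.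
    pose proof (triangle_ge (m - Z.abs (x - y))). lia. }
  destruct (firings_attain mvs (x - y) (length mvs)
              (firings mvs (x - y) (length mvs) - Z.min x y - 1)) as (t & Ht & Hs & Hf); [lia|].
  exists t. split; [auto|]. split; [auto|].
  pose proof (firings_after_eq mvs (x - y) t Ht). rewrite firings_S, Hs, Z.eqb_refl in *. lia.
Qed.

Lemma move_succ_x_before x y t t1 : 0 <= x -> x + 1 <= m - 1 -> 0 <= y <= m - 1 ->
  is_move_xy mvs x y t -> is_move_xy mvs (x + 1) y t1 ->
  (t1 < t)%nat /\ forall t', (t1 <= t' < t)%nat -> site mvs t' <> x - y.
Proof.
  intros Hx1 Hx2 Hy Hmv Hmv1.
  destruct (move_xy_pending x y t ltac:(lia) Hy Hmv) as (_ & P0 & P1 & _).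
  destruct (move_xy_pending (x + 1) y t1 ltac:(lia) Hy Hmv1) as (_ & Q0 & _ & Q2).
  replace (x + 1 - y - 1) with (x - y) in Q2 by lia.
  replace (x + 1 - y) with (x - y + 1) in Q0 by lia.
  split; [apply (lt_of_pending_lt m mvs (x - y + 1)) | apply (no_firing_of_pending_eq m mvs)];
    lia.
Qed.

Lemma move_succ_y_before x y t t2 : 0 <= x <= m - 1 -> 0 <= y -> y + 1 <= m - 1 ->
  is_move_xy mvs x y t -> is_move_xy mvs x (y + 1) t2 ->
  (t2 < t)%nat /\ forall t', (S t2 <= t' < t)%nat -> site mvs t' <> x - y - 1.
Proof.
  intros Hx Hy1 Hy2 Hmv Hmv2.
  destruct (move_xy_pending x y t Hx ltac:(lia) Hmv) as (_ & _ & _ & P2).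
  destruct (move_xy_pending x (y + 1) t2 Hx ltac:(lia) Hmv2) as (_ & Q0 & _ & _).
  destruct Hmv2 as (Ht2 & Hs2 & _).
  replace (x - (y + 1)) with (x - y - 1) in Q0, Hs2 by lia.
  pose proof (pending_S m mvs t2 (x - y - 1)) as E. rewrite Hs2, Z.eqb_refl in E.
  split; [apply (lt_of_pending_lt m mvs (x - y - 1)) | apply (no_firing_of_pending_eq m mvs)];
    lia.
Qed.

Lemma move_succ_xy_before x y t t0 : 0 <= x -> x + 1 <= m - 1 -> 0 <= y -> y + 1 <= m - 1 ->
  is_move_xy mvs x y t -> is_move_xy mvs (x + 1) (y + 1) t0 ->
  (t0 < t)%nat /\ forall t', (S t0 <= t' < t)%nat -> site mvs t' <> x - y.
Proof.
  intros Hx1 Hx2 Hy1 Hy2 Hmv Hmv0.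
  destruct (move_xy_pending x y t ltac:(lia) ltac:(lia) Hmv) as (_ & P0 & _ & _).
  destruct (move_xy_pending (x + 1) (y + 1) t0 ltac:(lia) ltac:(lia) Hmv0) as (_ & Q0 & _ & _).
  destruct Hmv0 as (Ht0 & Hs0 & _).
  replace (x + 1 - (y + 1)) with (x - y) in Q0, Hs0 by lia.
  pose proof (pending_S m mvs t0 (x - y)) as E. rewrite Hs0, Z.eqb_refl in E.
  split; [apply (lt_of_pending_lt m mvs (x - y)) | apply (no_firing_of_pending_eq m mvs)]; lia.
Qed.

(* Between the moves (x+1,y+1) and (x,y) the pending counts at x-y+1 and x-y-1 drop by one. *)
Lemma move_window x y t t0 t1 t2 : 0 <= x -> x + 1 <= m - 1 -> 0 <= y -> y + 1 <= m - 1 ->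
  is_move_xy mvs x y t -> is_move_xy mvs (x + 1) (y + 1) t0 ->
  is_move_xy mvs (x + 1) y t1 -> is_move_xy mvs x (y + 1) t2 ->
  forall t', (t0 <= t' < t)%nat ->
    (site mvs t' = x - y + 1 -> t' = t1) /\ (site mvs t' = x - y - 1 -> t' = t2).
Proof.
  intros Hx1 Hx2 Hy1 Hy2 Hmv Hmv0 Hmv1 Hmv2 t' Ht'.
  destruct (move_xy_pending x y t ltac:(lia) ltac:(lia) Hmv) as (_ & _ & P1 & P2).
  destruct (move_xy_pending (x + 1) (y + 1) t0 ltac:(lia) ltac:(lia) Hmv0) as (_ & _ & Q1 & Q2).
  destruct (move_xy_pending (x + 1) y t1 ltac:(lia) ltac:(lia) Hmv1) as (_ & R0 & _ & _).
  destruct (move_xy_pending x (y + 1) t2 ltac:(lia) ltac:(lia) Hmv2) as (_ & S0 & _ & _).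
  destruct Hmv1 as (_ & Hs1 & _), Hmv2 as (_ & Hs2 & _).
  replace (x + 1 - (y + 1) + 1) with (x - y + 1) in Q1 by lia.
  replace (x + 1 - (y + 1) - 1) with (x - y - 1) in Q2 by lia.
  replace (x + 1 - y) with (x - y + 1) in R0, Hs1 by lia.
  replace (x - (y + 1)) with (x - y - 1) in S0, Hs2 by lia.
  split; intros Hs'.
  - apply (unique_firing_of_pending_drop m mvs (x - y + 1) t0 t1 t t'); auto; lia.
  - apply (unique_firing_of_pending_drop m mvs (x - y - 1) t0 t2 t t'); auto; lia.
Qed.

Definition move_confined (x y : Z) : Prop :=
  forall t, is_move_xy mvs x y t -> confined m mvs (- y - 1) t (x - y).

Lemma move_confined_rightmost y : 0 <= y <= m - 1 -> move_confined (m - 1) y.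
Proof. intros Hy t [Ht _]. apply confined_rightmost; auto. lia. Qed.

Lemma move_confined_le x y : 0 <= x -> x + 1 <= m - 1 -> 0 <= y <= m - 1 ->
  move_confined (x + 1) y ->
  forall t, is_move_xy mvs x y t ->
  forall j, is_label m j -> j <= - y - 1 -> config_at mvs t j <= x - y.
Proof.
  intros Hx1 Hx2 Hy IH t Hmv j Hj Hjy.
  destruct (move_xy_exists (x + 1) y ltac:(lia) Hy) as [t1 Hmv1].
  destruct (move_succ_x_before x y t t1 Hx1 Hx2 Hy Hmv Hmv1) as [Hlt Hquiet].
  destruct (move_xy_pending (x + 1) y t1 ltac:(lia) Hy Hmv1) as (H2 & _).
  pose proof (IH t1 Hmv1) as Hconf. pose proof Hmv1 as (Ht1 & Hs1 & _).
  rewrite <- Hs1 in Hconf.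
  pose proof (confined_after_firing m mvs Hm Hv _ t1 Ht1 H2 Hconf j Hj Hjy).
  apply (config_le_preserved m mvs Hv _ _ (S t1)); [destruct Hmv; lia| |lia].
  intros t' Ht'. apply Hquiet. lia.
Qed.

Lemma move_left_chip_bound x y t0 t1 : 0 <= x -> x + 1 <= m - 1 -> 0 <= y -> y + 1 <= m - 1 ->
  move_confined (x + 1) (y + 1) ->
  is_move_xy mvs (x + 1) (y + 1) t0 -> is_move_xy mvs (x + 1) y t1 ->
  - y - 1 <= left_chip mvs t1.
Proof.
  intros Hx1 Hx2 Hy1 Hy2 IH Hmv0 Hmv1. apply Z.nlt_ge. intros Hlow.
  destruct (move_succ_y_before (x + 1) y t1 t0 ltac:(lia) Hy1 Hy2 Hmv1 Hmv0) as [Hlt Hquiet].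
  destruct (move_xy_pending (x + 1) (y + 1) t0 ltac:(lia) ltac:(lia) Hmv0) as (H2 & _).
  pose proof (IH t0 Hmv0) as Hconf. pose proof Hmv0 as (Ht0 & Hs0 & _).
  pose proof Hmv1 as (Ht1 & Hs1 & _).
  destruct (legal_at m mvs t1 Hv Ht1) as (Ha & _ & _ & Hca & _).
  rewrite <- Hs0 in Hconf.
  pose proof (confined_after_firing m mvs Hm Hv _ t0 Ht0 H2 Hconf (left_chip mvs t1) Ha
                ltac:(lia)) as Hafter.
  rewrite Hs0 in Hafter.
  pose proof (config_le_preserved m mvs Hv (x + 1 - y - 1) (left_chip mvs t1) (S t0) t1
                ltac:(lia) Hquiet ltac:(lia)).
  lia.
Qed.

Lemma move_site_occupants x y t t1 t2 : 0 <= x -> x + 1 <= m - 1 -> 0 <= y -> y + 1 <= m - 1 ->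
  is_move_xy mvs x y t -> is_move_xy mvs (x + 1) y t1 -> is_move_xy mvs x (y + 1) t2 ->
  forall j, is_label m j -> config_at mvs t j = x - y -> j = left_chip mvs t1 \/ j = right_chip mvs t2.
Proof.
  intros Hx1 Hx2 Hy1 Hy2 Hmv Hmv1 Hmv2 j Hj Hjs.
  destruct (move_xy_exists (x + 1) (y + 1) ltac:(lia) ltac:(lia)) as [t0 Hmv0].
  destruct (move_succ_xy_before x y t t0 Hx1 Hx2 Hy1 Hy2 Hmv Hmv0) as [Hlt _].
  destruct (move_xy_pending (x + 1) (y + 1) t0 ltac:(lia) ltac:(lia) Hmv0) as (H2 & _).
  pose proof Hmv0 as (Ht0 & Hs0 & _).
  pose proof (site_empty_after_firing m mvs Hm Hv t0 j Ht0 H2 Hj) as Hempty.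
  rewrite Hs0 in Hempty. replace (x + 1 - (y + 1)) with (x - y) in Hempty by lia.
  destruct (config_arrival m mvs Hv (x - y) j (S t0) t ltac:(destruct Hmv; lia) Hempty Hjs)
    as (t' & Ht' & [[-> Hs']|[-> Hs']]);
    destruct (move_window x y t t0 t1 t2 Hx1 Hx2 Hy1 Hy2 Hmv Hmv0 Hmv1 Hmv2 t' ltac:(lia))
    as [W1 W2].
  - left. now rewrite (W1 Hs').
  - right. now rewrite (W2 Hs').
Qed.

Lemma move_confined_unique x y : 0 <= x -> x + 1 <= m - 1 -> 0 <= y -> y + 1 <= m - 1 ->
  move_confined (x + 1) (y + 1) -> move_confined x (y + 1) ->
  forall t, is_move_xy mvs x y t ->
  forall j1 j2, is_label m j1 -> is_label m j2 -> j1 <= - y - 1 -> j2 <= - y - 1 ->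
    config_at mvs t j1 = x - y -> config_at mvs t j2 = x - y -> j1 = j2.
Proof.
  intros Hx1 Hx2 Hy1 Hy2 IHxy IHy t Hmv.
  destruct (move_xy_exists (x + 1) (y + 1) ltac:(lia) ltac:(lia)) as [t0 Hmv0].
  destruct (move_xy_exists (x + 1) y ltac:(lia) ltac:(lia)) as [t1 Hmv1].
  destruct (move_xy_exists x (y + 1) ltac:(lia) ltac:(lia)) as [t2 Hmv2].
  pose proof (move_left_chip_bound x y t0 t1 Hx1 Hx2 Hy1 Hy2 IHxy Hmv0 Hmv1) as Hleft.
  pose proof Hmv2 as (Ht2 & Hs2 & _).
  destruct (legal_at m mvs t2 Hv Ht2) as (Ha2 & Hb2 & Hab2 & Hca2 & Hcb2).
  destruct (IHy t2 Hmv2) as [_ Huniq2].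
  (* A low occupant is [left_chip mvs t1] or [right_chip mvs t2]; the latter cannot be below
     [-y-1], for then it and [left_chip mvs t2] would be two low chips on one site at (x,y+1). *)
  assert (Hpin : forall j, is_label m j -> j <= - y - 1 -> config_at mvs t j = x - y -> j = - y - 1).
  { intros j Hj Hjy Hjs.
    destruct (move_site_occupants x y t t1 t2 Hx1 Hx2 Hy1 Hy2 Hmv Hmv1 Hmv2 j Hj Hjs) as [->| ->];
      [lia|].
    destruct (Z.eq_dec (right_chip mvs t2) (- y - 1)); auto.
    enough (left_chip mvs t2 = right_chip mvs t2) by lia.
    apply Huniq2; auto; lia. }
  intros j1 j2 H1 H2 Hj1 Hj2 E1 E2. rewrite (Hpin j1), (Hpin j2); auto.
Qed.

Lemma move_confined_last_row x : 0 <= x -> x + 1 <= m - 1 ->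
  move_confined (x + 1) (m - 1) -> move_confined x (m - 1).
Proof.
  intros Hx1 Hx2 IH t Hmv. split.
  - apply (move_confined_le x (m - 1)); auto; lia.
  - intros j1 j2 H1 H2 Hj1 Hj2 _ _. unfold is_label in *. lia.
Qed.

Lemma move_confined_step x y : 0 <= x -> x + 1 <= m - 1 -> 0 <= y -> y + 1 <= m - 1 ->
  move_confined (x + 1) y -> move_confined (x + 1) (y + 1) -> move_confined x (y + 1) ->
  move_confined x y.
Proof.
  intros Hx1 Hx2 Hy1 Hy2 IHx IHxy IHy t Hmv. split.
  - apply (move_confined_le x y); auto; lia.
  - apply (move_confined_unique x y); auto.
Qed.

Lemma move_confined_all x y : 0 <= x <= m - 1 -> 0 <= y <= m - 1 -> move_confined x y.
Proof.
  intros Hx Hy. revert y Hy. revert x Hx.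
  apply (Z_bounded_ind_down (fun x => forall y, 0 <= y <= m - 1 -> move_confined x y)).
  { apply move_confined_rightmost. }
  intros x Hx IHx.
  apply (Z_bounded_ind_down (fun y => move_confined (x - 1) y)).
  - apply move_confined_last_row; try lia. rewrite Z.sub_add. apply IHx. lia.
  - intros y Hy IHy. apply move_confined_step; try lia; rewrite ?Z.sub_add; auto; apply IHx; lia.
Qed.

Lemma low_chip_bound k x : - m <= k < 0 -> 0 <= x <= m - 1 ->
  exists t, is_move_xy mvs x (- k - 1) t /\ config_at mvs t k <= x + k + 1.
Proof.
  intros Hk Hx. destruct (move_xy_exists x (- k - 1) Hx ltac:(lia)) as [t Hmv].
  exists t. split; auto.
  destruct (move_confined_all x (- k - 1) Hx ltac:(lia) t Hmv) as [Hle _].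
  pose proof (Hle k ltac:(unfold is_label; lia) ltac:(lia)). lia.
Qed.

End CompleteRun.

(** * Reflection *)

(* Negating the labels reverses their order, hence the swap. *)
Definition mirror (mvs : list (Z * Z)) : list (Z * Z) := map (fun p => (- snd p, - fst p)) mvs.

Lemma length_mirror mvs : length (mirror mvs) = length mvs.
Proof. apply length_map. Qed.

Lemma nth_mirror mvs t :
  nth t (mirror mvs) (0, 0) = (- snd (nth t mvs (0, 0)), - fst (nth t mvs (0, 0))).
Proof.
  unfold mirror. change (0, 0) with ((fun p : Z * Z => (- snd p, - fst p)) (0, 0)) at 1.
  apply map_nth.
Qed.

Lemma fold_fire_mirror l : Forall (fun p : Z * Z => fst p <> snd p) l -> forall c c',
  (forall j, c' j = - c (- j)) ->
  forall j, fold_left fire (map (fun p => (- snd p, - fst p)) l) c' j = - fold_left fire l c (- j).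
Proof.
  induction l as [|[a b] l IH]; intros Hl c c' Hc j; simpl; auto.
  inversion Hl as [|? ? Hab Hl']; subst. simpl in Hab.
  apply IH; auto. intros i. unfold fire; cbn [fst snd]. rewrite !Hc.
  destruct (Z.eq_dec i (- b)), (Z.eq_dec i (- a)), (Z.eq_dec (- i) a), (Z.eq_dec (- i) b);
    subst; rewrite ?Z.opp_involutive in *; lia.
Qed.

Section Mirror.

Variables (m : Z) (mvs : list (Z * Z)).
Hypothesis Hv : valid_run m mvs.

Lemma config_at_mirror t j : config_at (mirror mvs) t j = - config_at mvs t (- j).
Proof.
  unfold config_at, mirror. rewrite firstn_map. apply fold_fire_mirror; [|reflexivity].
  assert (Hall : Forall (fun p : Z * Z => fst p <> snd p) mvs).
  { apply Forall_forall. intros p Hp. destruct (In_nth mvs p (0, 0) Hp) as (t' & Ht' & <-).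
    destruct (Hv t' Ht') as (_ & _ & H & _). lia. }
  rewrite <- (firstn_skipn t mvs) in Hall. now apply Forall_app in Hall as [].
Qed.

Lemma site_mirror t : (t < length mvs)%nat -> site (mirror mvs) t = - site mvs t.
Proof.
  intros Ht. unfold site. rewrite nth_mirror, config_at_mirror. cbn [fst].
  rewrite Z.opp_involutive. destruct (Hv t Ht) as (_ & _ & _ & ->). reflexivity.
Qed.

Lemma complete_run_mirror : stable m (config_at mvs (length mvs)) ->
  complete_run m (mirror mvs).
Proof.
  intros Hs. split.
  - intros t Ht. rewrite length_mirror in Ht. rewrite nth_mirror.
    destruct (Hv t Ht) as (La & Lb & Hab & E). unfold legal, is_label in *; cbn [fst snd].
    rewrite !config_at_mirror, !Z.opp_involutive, E. lia.
  - intros k l Hk Hl Hkl. rewrite length_mirror, !config_at_mirror.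
    intros E. apply (Hs (- k) (- l)); unfold is_label in *; lia.
Qed.

Lemma is_move_xy_mirror x y t : is_move_xy (mirror mvs) x y t -> is_move_xy mvs y x t.
Proof.
  intros (Ht & Hs & Hf). rewrite length_mirror in Ht.
  rewrite site_mirror in Hs by auto. split; [auto|]. split; [lia|].
  rewrite Z.min_comm, <- Hf. unfold firings_after. rewrite length_mirror. f_equal.
  apply filter_ext_in. intros t' Ht'. apply in_seq in Ht'.
  rewrite site_mirror by lia.
  destruct (Z.eqb_spec (site mvs t') (y - x)), (Z.eqb_spec (- site mvs t') (x - y)); auto; lia.
Qed.

End Mirror.

Theorem lemma2p9 (m : Z) (hm : 1 <= m) (mvs : list (Z * Z))
  (hrun : complete_run m mvs) :
  (forall k x : Z, -m <= k < 0 -> 0 <= x <= m - 1 ->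
     exists t : nat, is_move_xy mvs x (- k - 1) t /\
                     config_at mvs t k <= x + k + 1) /\
  (forall k y : Z, 0 < k <= m -> 0 <= y <= m - 1 ->
     exists t : nat, is_move_xy mvs (k - 1) y t /\
                     config_at mvs t k >= k - 1 - y).
Proof.
  split; [apply low_chip_bound; auto|].
  intros k y Hk Hy. destruct hrun as [Hv Hs].
  destruct (low_chip_bound m (mirror mvs) hm (complete_run_mirror m mvs Hv Hs) (- k) y
              ltac:(lia) Hy) as (t & Hmv & Hpos).
  exists t. split.
  - apply (is_move_xy_mirror m mvs Hv) in Hmv. now replace (- - k - 1) with (k - 1) in Hmv by lia.
  - rewrite (config_at_mirror m mvs Hv), Z.opp_involutive in Hpos. lia.
Qed.
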